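(* Let $X$ be an $R$-module and $Y\le X$. Then either $\sqrt[M]{Y}=X$, or $\sqrt[M]{Y}$ equals the intersection of all $M$-prime submodules of $X$ containing $Y$.
   Context: $R$ is a ring with identity, modules are unital left $R$-modules, $M$ is a fixed left $R$-module. For $N\le M$ and a module $X$, $N\cdot X$ is the intersection of the kernels of all homomorphisms $X\to W$ where $W$ ranges over modules with $f(N)=0$ for all $f\in\mathrm{Hom}_R(M,W)$ (for $Z\le X$, $N\cdot Z$ is formed regarding $Z$ as a module). A proper submodule $P$ of $X$ is $M$-prime if for all $N\le M$, $Z\le X$, $N\cdot Z\subseteq P$ implies $N\cdot X\subseteq P$ or $Z\subseteq P$. A nonempty set $S\subseteq X\setminus\{0\}$ is an $M$-$m$-system if for every $N\le M$ and all $Y,Z\le X$: if $(Y+Z)\cap S\neq\emptyset$ and $(Y+N\cdot X)\cap S\neq\emptyset$, then $(Y+N\cdot Z)\cap S\neq\emptyset$. For $Y\le X$: if some $M$-prime submodule of $X$ contains $Y$, then $\sqrt[M]{Y}:=\{x\in X:\ \text{every } M\text{-}m\text{-system containing } x \text{ meets } Y\}$; otherwise $\sqrt[M]{Y}:=X$. *)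

From HB Require Import structures.
From mathcomp Require Import all_boot all_algebra.
Set Implicit Arguments. Unset Strict Implicit. Unset Printing Implicit Defensive.
Import GRing.Theory.
Local Open Scope ring_scope.

Definition submod (R : pzRingType) (X : lmodType R) (A : X -> Prop) : Prop :=
  A 0 /\ forall (r : R) (a b : X), A a -> A b -> A (r *: a + b).

Definition fullset (T : Type) : T -> Prop := fun _ => True.

(* g restricted to the submodule Z is an R-module homomorphism Z -> W
   (i.e. g|_Z is an element of Hom_R(Z, W); values of g outside Z are irrelevant) *)
Definition hom_on (R : pzRingType) (X W : lmodType R) (Z : X -> Prop) (g : X -> W) : Prop :=
  forall (r : R) (a b : X), Z a -> Z b -> g (r *: a + b) = r *: g a + g b.

Definition hom (R : pzRingType) (X W : lmodType R) (g : X -> W) : Prop :=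
  hom_on (@fullset X) g.

Definition annihilated (R : pzRingType) (M : lmodType R) (N : M -> Prop) (W : lmodType R) : Prop :=
  forall f : M -> W, hom f -> forall m, N m -> f m = 0.

(* N . Z  (Z regarded as a module): intersection of the kernels of all
   homomorphisms Z -> W, W ranging over modules with f(N) = 0 for all f : M -> W *)
Definition prodM (R : pzRingType) (M : lmodType R) (N : M -> Prop)
    (X : lmodType R) (Z : X -> Prop) : X -> Prop :=
  fun x => Z x /\
    forall W : lmodType R, annihilated N W ->
      forall g : X -> W, hom_on Z g -> g x = 0.

Definition included (T : Type) (A B : T -> Prop) : Prop := forall x, A x -> B x.

Definition sumset (R : pzRingType) (X : lmodType R) (A B : X -> Prop) : X -> Prop :=
  fun x => exists a b, A a /\ B b /\ x = a + b.

Definition meets (T : Type) (A B : T -> Prop) : Prop := exists x, A x /\ B x.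

Definition Mprime (R : pzRingType) (M X : lmodType R) (P : X -> Prop) : Prop :=
  submod P /\ (exists x, ~ P x) /\
  forall (N : M -> Prop) (Z : X -> Prop), submod N -> submod Z ->
    included (prodM N Z) P ->
    included (prodM N (@fullset X)) P \/ included Z P.

Definition Msystem (R : pzRingType) (M X : lmodType R) (S : X -> Prop) : Prop :=
  (exists x, S x) /\ (forall x, S x -> x <> 0) /\
  forall (N : M -> Prop) (Y Z : X -> Prop), submod N -> submod Y -> submod Z ->
    meets (sumset Y Z) S ->
    meets (sumset Y (prodM N (@fullset X))) S ->
    meets (sumset Y (prodM N Z)) S.

(* The M-radical of Y: if some M-prime submodule contains Y, it is the set of x
   such that every M-m-system containing x meets Y; otherwise it is all of X
   (encoded by the implication: when no M-prime contains Y, every x belongs). *)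
Definition Mrad (R : pzRingType) (M X : lmodType R) (Y : X -> Prop) : X -> Prop :=
  fun x => (exists P : X -> Prop, Mprime M P /\ included Y P) ->
    forall S : X -> Prop, Msystem M S -> S x -> meets S Y.

From Pilot Require Import Defs.
From HB Require Import structures.
From mathcomp Require Import all_boot all_algebra.
From mathcomp Require Import classical_sets.
From Stdlib Require Import Classical.
Set Implicit Arguments. Unset Strict Implicit. Unset Printing Implicit Defensive.
Import GRing.Theory.
Local Open Scope ring_scope.

(* If no M-prime contains Y the
   radical is X by definition, so assume some M-prime contains Y.
   - If x is in the radical and P is an M-prime containing Y with x not in P,
     then the complement of P is an M-m-system containing x (an M-prime is
     exactly a submodule whose complement satisfies the m-system condition),
     so it meets Y -- impossible since Y is inside P.
   - Conversely, if x lies in every M-prime containing Y and S is an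
     M-m-system containing x and missing Y, Zorn's lemma gives a submodule A
     maximal among those containing Y and missing S.  Maximality together
     with the m-system condition on S makes A an M-prime; it contains Y but
     not x, a contradiction. *)

Section Submodules.
Variables (R : pzRingType) (X : lmodType R).

Lemma hom_on_zero (W : lmodType R) (Z : X -> Prop) (g : X -> W) :
  hom_on Z g -> Z 0 -> g 0 = 0.
Proof.
move=> hg Z0; have := hg 1 0 0 Z0 Z0; rewrite scaler0 add0r scale1r => h.
by apply: (addrI (g 0)); rewrite addr0 -h.
Qed.

Lemma submod_add (A : X -> Prop) a b : submod A -> A a -> A b -> A (a + b).
Proof. by move=> hA Ha Hb; have := hA.2 1 a b Ha Hb; rewrite scale1r. Qed.

Lemma sumset_submod (A B : X -> Prop) :
  submod A -> submod B -> submod (sumset A B).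
Proof.
move=> [A0 hA] [B0 hB]; split; first by exists 0, 0; rewrite addr0.
move=> r _ _ [a1 [b1 [Ha1 [Hb1 ->]]]] [a2 [b2 [Ha2 [Hb2 ->]]]].
exists (r *: a1 + a2), (r *: b1 + b2); split; first exact: hA.
by split; [exact: hB | rewrite scalerDr addrACA].
Qed.

Lemma sumset_incl_l (A B : X -> Prop) : submod B -> included A (sumset A B).
Proof. by move=> hB a Aa; exists a, 0; split; [|split; [exact: hB.1 | rewrite addr0]]. Qed.

Lemma sumset_incl_r (A B : X -> Prop) : submod A -> included B (sumset A B).
Proof. by move=> hA b Bb; exists 0, b; split; [exact: hA.1 | split; [|rewrite add0r]]. Qed.

Lemma sumset_least (A B C : X -> Prop) :
  submod C -> included A C -> included B C -> included (sumset A B) C.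
Proof. by move=> hC AC BC _ [a [b [Aa [Bb ->]]]]; apply: submod_add; auto. Qed.

Lemma fullset_submod : submod (@fullset X).
Proof. by []. Qed.

End Submodules.

Section Products.
Variables (R : pzRingType) (M X : lmodType R) (N : M -> Prop).

Lemma prodM_zero (Z : X -> Prop) : submod Z -> prodM N Z 0.
Proof. by move=> [Z0 _]; split => // W _ g hg; apply: hom_on_zero hg Z0. Qed.

Lemma prodM_submod (Z : X -> Prop) : submod Z -> submod (prodM N Z).
Proof.
move=> hZ; split; first exact: prodM_zero.
move=> r a b [Za ha] [Zb hb]; split; first exact: hZ.2.
move=> W hW g hg; rewrite hg // (ha W hW g hg) (hb W hW g hg).
by rewrite scaler0 addr0.
Qed.

End Products.

Section PrimesAndSystems.
Variables (R : pzRingType) (M X : lmodType R).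

Lemma Mprime_compl_Msystem (P : X -> Prop) :
  Mprime M P -> Msystem M (fun z => ~ P z).
Proof.
move=> [hP [nonfull hpr]]; split => //.
split; first by move=> z nz z0; apply: nz; rewrite z0; exact: hP.1.
move=> N Y Z hN hY hZ [u [YZu nPu]] [v [YNv nPv]].
apply: NNPP => hn.
have YNZP : included (sumset Y (prodM N Z)) P.
  by move=> w hw; apply: NNPP => nw; apply: hn; exists w.
have YP : included Y P by move=> y /(sumset_incl_l (prodM_submod N hZ)) /YNZP.
have NZP : included (prodM N Z) P by move=> z /(sumset_incl_r hY) /YNZP.
case: (hpr N Z hN hZ NZP) => [NXP | ZP].
- by apply: nPv; apply: sumset_least YNv.
- by apply: nPu; apply: sumset_least YZu.
Qed.

Definition maximal_avoiding (Y S A : X -> Prop) : Prop :=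
  [/\ submod A, included Y A, ~ Defs.meets A S &
      forall Q, submod Q -> included A Q -> ~ Defs.meets Q S -> included Q A].

Lemma chain_bigcup_submod (F : set (X -> Prop)) :
  (exists Q z, F Q /\ Q z) -> (forall Q z, F Q -> Q z -> submod Q) ->
  total_on F subset -> submod (\bigcup_(Q in F) Q)%classic.
Proof.
move=> [Q0 [z0 [FQ0 Qz0]]] hF tot.
split; first by exists Q0 => //; exact: (hF _ _ FQ0 Qz0).1.
move=> r a b [Qa FQa Qaa] [Qb FQb Qbb].
case: (tot _ _ FQa FQb) => sub.
- by exists Qb => //; apply: (hF _ _ FQb Qbb).2 => //; exact: sub.
- by exists Qa => //; apply: (hF _ _ FQa Qaa).2 => //; exact: sub.
Qed.

(* The empty set is added to the family so that the empty chain has an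
   upper bound; it is never maximal since Y itself lies strictly above it. *)
Lemma exists_maximal_avoiding (Y S : X -> Prop) :
  submod Y -> ~ Defs.meets Y S -> exists A, maximal_avoiding Y S A.
Proof.
move=> hY YS.
pose good Q := [/\ submod Q, included Y Q & ~ Defs.meets Q S].
pose Fam Q := Q = set0 \/ good Q.
have [A [FamA maxA]] : exists A, Fam A /\ forall B, proper A B -> ~ Fam B.
  apply: Zorn_bigcup => F FP tot.
  case: (classic (exists Q, F Q /\ exists z, Q z)) => [[Q0 [FQ0 [z0 Qz0]]]|hne].
  - have goodF Q z : F Q -> Q z -> good Q.
      by move=> FQ Qz; case: (FP _ FQ) => // eQ; rewrite eQ in Qz.
    right; split.
    + apply: chain_bigcup_submod => //; first by exists Q0, z0.
      by move=> Q z FQ Qz; case: (goodF _ _ FQ Qz).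
    + by move=> y Yy; exists Q0 => //; case: (goodF _ _ FQ0 Qz0) => _ /(_ y Yy).
    + by move=> [z [[Q FQ Qz] Sz]]; case: (goodF _ _ FQ Qz) => _ _ QS; apply: QS; exists z.
  - left; apply: boolp.funext => z; apply: boolp.propext; split => // -[Q FQ Qz].
    by apply: hne; exists Q; split => //; exists z.
have goodA : good A.
  case: FamA => // eA; exfalso; apply: (maxA Y); last by right; split => // y.
  by rewrite eA; split => // h; exact: h 0 hY.1.
case: goodA => hA YA AS; exists A; split => // Q hQ AQ QS.
apply: NNPP => nQA; apply: (maxA Q).
  by split => // h; apply: nQA => z; exact: h.
by right; split => // y Yy; apply: AQ; apply: YA.
Qed.

(* A submodule maximal with respect to missing an M-m-system S is M-prime:
   if N . Z lies in A but neither N . X nor Z does, then A + Z and A + N . X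
   both meet S by maximality, hence so does A + N . Z = A. *)
Lemma maximal_avoiding_Mprime (Y S A : X -> Prop) :
  Msystem M S -> maximal_avoiding Y S A -> Mprime M A.
Proof.
move=> [[s Ss] [_ hS]] [hA YA AS maxA].
have meets_above Q : submod Q -> included A Q -> ~ included Q A -> Defs.meets Q S.
  by move=> hQ AQ nQA; apply: NNPP => QS; apply: nQA; apply: maxA.
split => //; split; first by exists s => As; apply: AS; exists s.
move=> N Z hN hZ NZA; apply: NNPP => /not_or_and [nNXA nZA].
have hNX := prodM_submod N (@fullset_submod R X).
have AZS : Defs.meets (sumset A Z) S.
  apply: meets_above; [exact: sumset_submod | exact: sumset_incl_l |].
  by move=> h; apply: nZA => z /(sumset_incl_r hA) /h.
have ANXS : Defs.meets (sumset A (prodM N (@fullset X))) S.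
  apply: meets_above; [exact: sumset_submod | exact: sumset_incl_l |].
  by move=> h; apply: nNXA => z /(sumset_incl_r hA) /h.
have [w [ANZw Sw]] := hS N A Z hN hA hZ AZS ANXS.
by apply: AS; exists w; split => //; apply: sumset_least ANZw.
Qed.

End PrimesAndSystems.

Theorem theorem2p17 (R : pzRingType) (M X : lmodType R) (Y : X -> Prop)
    (hY : submod Y) :
  (forall x : X, Mrad M Y x) \/
  (forall x : X, Mrad M Y x <->
     (forall P : X -> Prop, Mprime M P -> included Y P -> P x)).
Proof.
case: (classic (exists P : X -> Prop, Mprime M P /\ included Y P)) => hex; last first.
  by left => x h; exfalso; apply: hex.
right => x; split.
- move=> hx P hP YP; apply: NNPP => nPx.
  have [y [nPy Yy]] := hx hex _ (Mprime_compl_Msystem hP) nPx.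
  by apply: nPy; apply: YP.
- move=> hall _ S hS Sx; apply: NNPP => YS.
  have [A maxA] : exists A, maximal_avoiding Y S A.
    by apply: exists_maximal_avoiding => // -[z [Yz Sz]]; apply: YS; exists z.
  have primeA := maximal_avoiding_Mprime hS maxA.
  case: maxA => _ YA AS _.
  by apply: AS; exists x; split => //; apply: hall.
Qed.
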